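(* Let $Y\sim N(\theta,1)$ with $\theta\in\mathbb{R}$, let $a>0$ and $\nu_a=\mathbb{E}(Z^2\mid|Z|\ge a)$ for $Z\sim N(0,1)$. Let $A=(Y^2-\nu_a)\mathbb{1}(|Y|\ge a)$ and $B=Y^2-1$. Then the distribution of $A-B$ is stochastically decreasing in $|\theta|$, i.e. if $|\theta|\le|\theta'|$ then $\mathbb{P}_{\theta'}(A-B\le t)\ge\mathbb{P}_{\theta}(A-B\le t)$ for all $t\in\mathbb{R}$. *)

From HB Require Import structures.
From mathcomp Require Import all_boot all_order all_algebra.
From mathcomp Require Import all_classical all_reals all_analysis.
Set Implicit Arguments. Unset Strict Implicit. Unset Printing Implicit Defensive.
Import Order.TTheory GRing.Theory Num.Theory.
Local Open Scope classical_set_scope.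
Local Open Scope ring_scope.

(* Law of Z ~ N(0,1) / Y ~ N(theta,1): the library's normal probability measure
   normal_prob m s (on R, with density normal_pdf m s w.r.t. Lebesgue measure). *)

Definition tail_set {R : realType} (a : R) : set R := [set z | a <= `|z|].

Definition nu {R : realType} (a : R) : R :=
  fine (\int[normal_prob 0 1]_(z in tail_set a) ((z ^+ 2)%:E))%E
  / fine (normal_prob 0 1 (tail_set a)).

Definition statA {R : realType} (a y : R) : R :=
  (y ^+ 2 - nu a) * (\1_(tail_set a) y).

Definition statB {R : realType} (y : R) : R := y ^+ 2 - 1.

Definition cdf_AmB {R : realType} (a theta t : R) : \bar R :=
  normal_prob theta 1 [set y | statA a y - statB y <= t].

(* Let m be the midpoint of theta and theta'. The reflection y |-> 2m - y
   carries N(theta,1) to N(theta',1), and on the side of m where theta lies the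
   density of N(theta,1) dominates that of N(theta',1). Hence
   P_theta(U) <= P_theta'(U) for every set U that the reflection maps into
   itself from that side. The sublevel sets of A - B have this property: A - B
   equals 1 - nu_a on the tail {|y| >= a} and 1 - y^2 off it, a nonincreasing
   function of y^2 because nu_a >= a^2, and when |theta| <= |theta'| the
   reflection of a point on theta's side has a larger square. *)

From HB Require Import structures.
From mathcomp Require Import all_boot all_order all_algebra.
From mathcomp Require Import all_classical all_reals all_analysis.
From mathcomp Require Import measurable_realfun lra ring.
Import Order.TTheory GRing.Theory Num.Theory.
Local Open Scope classical_set_scope.
Local Open Scope ring_scope.

Section normal_density_facts.
Context {R : realType}.
Local Notation mu := (@lebesgue_measure R).
Implicit Types (m s : R) (U : set R).

Lemma normal_pdf_peak_fun m s x : s != 0 ->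
  normal_pdf m s x = normal_peak s * normal_fun m s x.
Proof. by move=> s0; rewrite /normal_pdf (negbTE s0). Qed.

Lemma normal_fun_le m m' s x x' : (x - m) ^+ 2 <= (x' - m') ^+ 2 ->
  normal_fun m' s x' <= normal_fun m s x.
Proof.
move=> le_d; rewrite /normal_fun ler_expR !mulNr lerN2 ler_wpM2r//.
by rewrite invr_ge0 mulrn_wge0// sqr_ge0.
Qed.

Lemma normal_pdf_le m m' s x x' : s != 0 -> (x - m) ^+ 2 <= (x' - m') ^+ 2 ->
  normal_pdf m' s x' <= normal_pdf m s x.
Proof.
move=> s0 le_d; rewrite !normal_pdf_peak_fun// ler_wpM2l ?normal_peak_ge0//.
exact: normal_fun_le.
Qed.

Lemma normal_pdf_reflect m s c x : s != 0 ->
  normal_pdf m s (c - x) = normal_pdf (c - m) s x.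
Proof.
move=> s0; rewrite !normal_pdf_peak_fun// /normal_fun.
by have -> : (c - x - m) ^+ 2 = (x - (c - m)) ^+ 2 by ring.
Qed.

Lemma normal_probE m s U :
  normal_prob m s U = (\int[mu]_x ((\1_U x * normal_pdf m s x)%:E))%E.
Proof.
rewrite /normal_prob integral_mkcond; apply: eq_integral => x _.
by rewrite patchE indicE; case: (x \in U); rewrite ?mul1r ?mul0r.
Qed.

Lemma ge0_integral_normal_prob m s (f : R -> \bar R) (E : set R) :
  measurable E -> measurable_fun E f -> (forall x, (0 <= f x)%E) ->
  (\int[normal_prob m s]_(x in E) f x =
   \int[mu]_(x in E) (f x * (normal_pdf m s x)%:E))%E.
Proof.
move=> mE mf f0.
have dom := @normal_prob_dominates R m s.
rewrite -(Radon_Nikodym_SigmaFinite.change_of_variables dom)//.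
apply: ae_eq_integral => //.
- apply: emeasurable_funM => //; apply: measurable_funTS.
  exact: measurable_int (Radon_Nikodym_SigmaFinite.f_integrable dom).
- apply: emeasurable_funM => //; apply/measurable_EFinP.
  by apply/measurable_funTS; exact: measurable_normal_pdf.
- apply: ae_eqe_mul2l; apply: (ae_eq_subset (A := setT)) => //.
  apply: integral_ae_eq => //.
  + exact: Radon_Nikodym_SigmaFinite.f_integrable.
  + by apply/measurable_EFinP; exact: measurable_normal_pdf.
  + by move=> A _ mA; rewrite -Radon_Nikodym_SigmaFinite.f_integral.
Qed.

End normal_density_facts.

Section lebesgue_reflection.
Context {R : realType}.
Local Notation mu := (@lebesgue_measure R).

Lemma lebesgue_measure_reflect (c : R) (A : set R) : measurable A ->
  pushforward mu ((fun y => c - y) : R -> measurableTypeR R) A = mu A.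
Proof.
move=> mA.
have mr : measurable_fun [set: R] ((fun y => c - y) : R -> measurableTypeR R).
  exact: measurable_funB.
apply/esym/lebesgue_measure_unique => //= _ [[a b]] _ <-; rewrite /pushforward/=.
have -> : (fun y => c - y) @^-1` `]a, b]%classic = `[c - b, c - a[%classic.
  by apply/seteqP; split => x /=; rewrite !in_itv/= => /andP[? ?];
    apply/andP; split; lra.
rewrite !lebesgue_measure_itv/= !lte_fin.
have -> : (c - b < c - a) = (a < b) by apply/idP/idP => ?; lra.
by case: ifP => // _; rewrite -EFinD; congr EFin; lra.
Qed.

Lemma ge0_integral_reflect (c : R) (g : R -> \bar R) :
  measurable_fun [set: R] g -> (forall x, (0 <= g x)%E) ->
  (\int[mu]_x g (c - x)%R = \int[mu]_x g x)%E.
Proof.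
move=> mg g0.
have mr : measurable_fun [set: measurableTypeR R]
    ((fun y => c - y) : _ -> measurableTypeR R) by exact: measurable_funB.
have := ge0_integral_pushforward mr mu measurableT mg (fun y _ => g0 y).
rewrite preimage_setT => <-.
by apply: eq_measure_integral => /= A mA _; rewrite lebesgue_measure_reflect.
Qed.

End lebesgue_reflection.

Lemma le_indic {T : Type} {R : numDomainType} (U : set T) (x y : T) :
  (U x -> U y) -> \1_U x <= \1_U y :> R.
Proof.
move=> UxUy; rewrite !indicE; case: (boolP (x \in U)) => [/set_mem/UxUy Uy|_].
  by rewrite mem_set.
by case: (_ \in _).
Qed.

Section normal_prob_reflection.
Context {R : realType} (s : R).
Hypothesis s0 : s != 0.
Local Notation mu := (@lebesgue_measure R).

Lemma normal_prob_reflect (c th : R) (U : set R) : measurable U ->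
  normal_prob th s U =
  (\int[mu]_y ((\1_U (c - y) * normal_pdf (c - th) s y)%:E))%E.
Proof.
move=> mU; rewrite normal_probE -(ge0_integral_reflect c); last first.
- by move=> y; rewrite lee_fin mulr_ge0 ?normal_pdf_ge0.
- apply/measurable_EFinP/measurable_funM; last exact: measurable_normal_pdf.
  exact: measurable_indic.
by apply: eq_integral => y _; rewrite normal_pdf_reflect.
Qed.

Variables (m th : R) (U : set R).
Let th' := 2 * m - th.
Hypothesis mU : measurable U.
Hypothesis U_reflect : forall y, 0 <= (th - m) * (y - m) -> U y -> U (2 * m - y).

Let sqr_dist_reflect y :
  (y - th') ^+ 2 - (y - th) ^+ 2 = 4 * ((th - m) * (y - m)).
Proof. by rewrite /th'; ring. Qed.

Let indic_pdf_rearrange y :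
  \1_U y * normal_pdf th s y + \1_U (2 * m - y) * normal_pdf th' s y <=
  \1_U y * normal_pdf th' s y + \1_U (2 * m - y) * normal_pdf th s y.
Proof.
suff : (\1_U y - \1_U (2 * m - y)) * (normal_pdf th s y - normal_pdf th' s y) <= 0.
  by move=> ?; nra.
have [side|side] := leP 0 ((th - m) * (y - m)).
- rewrite mulr_le0_ge0// ?subr_le0 ?subr_ge0; first exact/le_indic/U_reflect.
  apply: normal_pdf_le => //; rewrite -subr_ge0 sqr_dist_reflect; lra.
- rewrite mulr_ge0_le0// ?subr_le0 ?subr_ge0.
    apply: le_indic => Ur; have := U_reflect (2 * m - y) _ Ur.
    by rewrite subKr; apply; nra.
  apply: normal_pdf_le => //; rewrite -subr_le0 sqr_dist_reflect; lra.
Qed.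

Lemma normal_prob_le_reflect : (normal_prob th s U <= normal_prob th' s U)%E.
Proof.
have th'K : 2 * m - th' = th by rewrite /th'; ring.
(* Rewriting one copy of each side through the reflection turns the doubled
   inequality into the pointwise [indic_pdf_rearrange]. *)
have doubled : (normal_prob th s U + normal_prob th s U <=
                normal_prob th' s U + normal_prob th' s U)%E.
  rewrite [X in (_ + X <= _)%E](normal_prob_reflect (2 * m))//.
  rewrite [X in (_ <= _ + X)%E](normal_prob_reflect (2 * m))// -/th' th'K.
  have G0 z th0 y : (0 <= (\1_U z * normal_pdf th0 s y)%:E)%E.
    by rewrite lee_fin mulr_ge0 ?normal_pdf_ge0.
  have mGid th0 : measurable_fun [set: R]
      (fun y => (\1_U y * normal_pdf th0 s y)%:E).
    apply/measurable_EFinP/measurable_funM; last exact: measurable_normal_pdf.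
    exact: measurable_indic.
  have mGr th0 : measurable_fun [set: R]
      (fun y => (\1_U (2 * m - y) * normal_pdf th0 s y)%:E).
    apply/measurable_EFinP/measurable_funM; last exact: measurable_normal_pdf.
    by apply: measurableT_comp; [exact: measurable_indic|exact: measurable_funB].
  rewrite !normal_probE -!ge0_integralD//;
    try by [move=> *; exact: G0|exact: mGid|exact: mGr].
  apply: ge0_le_integral => //.
  - by move=> y _; apply: adde_ge0; exact: G0.
  - by apply: emeasurable_funD; [exact: mGid|exact: mGr].
  - by apply: emeasurable_funD; [exact: mGid|exact: mGr].
  - by move=> y _; rewrite -!EFinD lee_fin indic_pdf_rearrange.
rewrite leNgt; apply/negP => lt_th'_th.
by have := lteD lt_th'_th lt_th'_th; rewrite ltNge doubled.
Qed.
End normal_prob_reflection.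

Section normal_tail.
Context {R : realType}.
Local Notation mu := (@lebesgue_measure R).

Lemma normal_pdf_gt0 (m s x : R) : s != 0 -> 0 < normal_pdf m s x.
Proof.
by move=> s0; rewrite normal_pdf_peak_fun// mulr_gt0 ?expR_gt0 ?normal_peak_gt0.
Qed.

Lemma measurable_tail_set (a : R) : measurable (tail_set a).
Proof.
have -> : tail_set a = (fun x : R => `|x|) @^-1` `[a, +oo[%classic.
  by apply/seteqP; split => x /=; rewrite in_itv/= andbT.
by rewrite -[X in measurable X]setTI; exact: normr_measurable.
Qed.

Lemma normal_prob_tail_gt0 (a : R) : (0 < normal_prob 0 1 (tail_set a))%E.
Proof.
set b := `|a|.
have b0 : 0 <= b := normr_ge0 a.
have mpdf : measurable_fun `[b, (b + 1)%R]%classic (EFin \o normal_pdf 0 1).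
  by apply/measurable_EFinP/measurable_funTS; exact: measurable_normal_pdf.
apply: (@lt_le_trans _ _ (\int[mu]_(x in `[b, (b + 1)%R]) (normal_pdf 0 1 x)%:E)%E).
  apply: (@lt_le_trans _ _
      ((normal_pdf 0 1 (b + 1))%:E * mu `[b, (b + 1)%R]%classic)%E).
    rewrite lebesgue_measure_itv/= lte_fin ltrDl ltr01 -EFinD addrAC subrr add0r.
    by rewrite mule1 lte_fin normal_pdf_gt0 ?oner_neq0.
  rewrite -integral_cst//.
  apply: ge0_le_integral => //.
  - by move=> x _; rewrite lee_fin normal_pdf_ge0.
  - move=> x; rewrite /= in_itv/= => /andP[bx xb1].
    rewrite lee_fin normal_pdf_le ?oner_neq0// !subr0 ler_sqr ?nnegrE; lra.
apply: ge0_subset_integral => //.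
- exact: measurable_tail_set.
- by apply/measurable_EFinP/measurable_funTS; exact: measurable_normal_pdf.
- by move=> x _; rewrite lee_fin normal_pdf_ge0.
- move=> x; rewrite /= in_itv/= => /andP[bx _]; rewrite /tail_set/=.
  by apply: (le_trans (ler_norm a)); apply: (le_trans bx); exact: ler_norm.
Qed.

Lemma sqr_normal_fun_le (x : R) :
  x ^+ 2 * normal_fun 0 1 x <= 4 * normal_fun 0 (Num.sqrt 2) x.
Proof.
(* With u = x^2/4 this reads u * e^-u <= 1, i.e. u <= e^u. *)
rewrite /normal_fun sqr_sqrtr ?ler0n// expr1n subr0.
set u := x ^+ 2 / 4.
have -> : - x ^+ 2 / (2 *+ 2) = - u by rewrite /u; field.
have -> : - x ^+ 2 / (1 *+ 2) = - u + - u by rewrite /u; field.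
have -> : x ^+ 2 = 4 * u by rewrite /u; field.
rewrite expRD -mulrA ler_wpM2l// mulrA -[leRHS]mul1r ler_wpM2r ?expR_ge0//.
rewrite expRN ler_pdivrMr ?expR_gt0// mul1r.
by have := expR_ge1Dx u; lra.
Qed.

Lemma integral_sqr_normal_prob_lty (E : set R) : measurable E ->
  (\int[normal_prob 0 1]_(x in E) (x ^+ 2)%:E < +oo)%E.
Proof.
move=> mE.
rewrite ge0_integral_normal_prob//; last 2 first.
- by apply/measurable_EFinP; exact: exprn_measurable.
- by move=> x; rewrite lee_fin sqr_ge0.
set K := 4 * normal_peak 1 / normal_peak (Num.sqrt 2 : R).
have K0 : 0 <= K by rewrite !mulr_ge0 ?invr_ge0 ?normal_peak_ge0.
have s2 : Num.sqrt 2 != 0 :> R by rewrite gt_eqF// sqrtr_gt0.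
have mK : measurable_fun [set: R] (fun x => (K * normal_pdf 0 (Num.sqrt 2) x)%:E).
  by apply/measurable_EFinP/measurable_funM => //; exact: measurable_normal_pdf.
apply: (@le_lt_trans _ _ (\int[mu]_x (K * normal_pdf 0 (Num.sqrt 2) x)%:E)%E).
  apply: (@le_trans _ _
      (\int[mu]_(x in E) (K * normal_pdf 0 (Num.sqrt 2) x)%:E)%E); last first.
    apply: ge0_subset_integral => //.
    by move=> x _; rewrite lee_fin mulr_ge0 ?normal_pdf_ge0.
  apply: ge0_le_integral => //.
  - by move=> x _; rewrite -EFinM lee_fin mulr_ge0 ?sqr_ge0 ?normal_pdf_ge0.
  - apply/measurable_EFinP/measurable_funM; first exact: exprn_measurable.
    by apply: measurable_funTS; exact: measurable_normal_pdf.
  - exact: measurable_funTS.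
  move=> x _; rewrite -EFinM lee_fin !normal_pdf_peak_fun ?oner_neq0//.
  have -> : K * (normal_peak (Num.sqrt 2) * normal_fun 0 (Num.sqrt 2) x) =
            normal_peak 1 * (4 * normal_fun 0 (Num.sqrt 2) x).
    by rewrite /K; field; rewrite gt_eqF ?normal_peak_gt0.
  by rewrite mulrCA ler_wpM2l ?normal_peak_ge0 ?sqr_normal_fun_le.
under eq_integral do rewrite EFinM.
rewrite ge0_integralZl_EFin//.
- by rewrite integral_normal_pdf mule1 ltry.
- by move=> x _; rewrite lee_fin normal_pdf_ge0.
- by apply/measurable_EFinP; exact: measurable_normal_pdf.
Qed.

Lemma sqr_le_nu (a : R) : 0 <= a -> a ^+ 2 <= nu a.
Proof.
move=> a0; have mT := measurable_tail_set a.
set P := normal_prob 0 1 (tail_set a).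
set I := (\int[normal_prob 0 1]_(z in tail_set a) (z ^+ 2)%:E)%E.
have P_gt0 : (0 < P)%E := normal_prob_tail_gt0 a.
have P_fin : P \is a fin_num.
  by rewrite ge0_fin_numE ?(ltW P_gt0)// (le_lt_trans (probability_le1 _ _)) ?ltry.
have aP_le_I : ((a ^+ 2)%:E * P <= I)%E.
  rewrite /P /I -integral_cst//; apply: ge0_le_integral => //.
  - by move=> x _; rewrite lee_fin sqr_ge0.
  - by apply/measurable_EFinP; exact: exprn_measurable.
  by move=> x ax; rewrite lee_fin -(real_normK (num_real x)) ler_sqr ?nnegrE.
have I_fin : I \is a fin_num.
  rewrite ge0_fin_numE ?integral_sqr_normal_prob_lty//.
  by apply: le_trans aP_le_I; rewrite mule_ge0 ?lee_fin ?sqr_ge0 ?ltW.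
rewrite /nu -/P -/I ler_pdivlMr; last by rewrite fine_gt0// P_gt0 ltey_eq P_fin.
by rewrite -lee_fin EFinM !fineK.
Qed.
End normal_tail.

Section statistic.
Context {R : realType}.

Lemma statAB_E (a y : R) :
  statA a y - statB y = if a <= `|y| then 1 - nu a else 1 - y ^+ 2.
Proof.
rewrite /statA /statB indicE.
have -> : (y \in tail_set a) = (a <= `|y|) by apply/idP/idP => [/set_mem|/mem_set].
by case: ifP => _; rewrite ?mulr1 ?mulr0; ring.
Qed.

Lemma statAB_antitone (a y z : R) : 0 <= a -> y ^+ 2 <= z ^+ 2 ->
  statA a z - statB z <= statA a y - statB y.
Proof.
move=> a0 yz; have nu_a := sqr_le_nu a a0.
have yz_abs : `|y| <= `|z| by rewrite -ler_sqr ?nnegrE// !real_normK ?num_real.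
have y_abs : y ^+ 2 = `|y| ^+ 2 by rewrite real_normK ?num_real.
rewrite !statAB_E; have [az|az] := leP a `|z|; have [ay|ay] := leP a `|y|.
- by [].
- have : `|y| ^+ 2 < a ^+ 2 by rewrite ltr_sqr ?nnegrE.
  lra.
- lra.
- lra.
Qed.

Lemma measurable_statAB_le (a t : R) :
  measurable [set y : R | statA a y - statB y <= t].
Proof.
have msq : measurable_fun [set: R] (fun y : R => y ^+ 2) by exact: exprn_measurable.
have mAB : measurable_fun [set: R] (fun y : R => statA a y - statB y).
  apply: measurable_funB; last exact: measurable_funB.
  apply: measurable_funM; first exact: measurable_funB.
  by apply: measurable_indic; exact: measurable_tail_set.
have -> : [set y : R | statA a y - statB y <= t] =
    (fun y : R => statA a y - statB y) @^-1` `]-oo, t]%classic.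
  by apply/seteqP; split => x /=; rewrite in_itv.
by rewrite -[X in measurable X]setTI; exact: mAB.
Qed.

End statistic.

Theorem lemma8 (R : realType) (a theta theta' : R) :
  0 < a -> `|theta| <= `|theta'| ->
  forall t : R, (cdf_AmB a theta t <= cdf_AmB a theta' t)%E.
Proof.
move=> a0 le_th t.
have [<-|neq] := eqVneq theta theta'; first by [].
set m := (theta + theta') / 2.
have m_th : 0 <= (m - theta) * m.
  have -> : (m - theta) * m = (theta' ^+ 2 - theta ^+ 2) / 4 by rewrite /m; field.
  rewrite divr_ge0// subr_ge0 -(real_normK (num_real theta)).
  by rewrite -(real_normK (num_real theta')) ler_sqr ?nnegrE.
have m_th_sq : 0 < (m - theta) ^+ 2.
  by rewrite exprn_even_gt0//; apply: contra neq; rewrite subr_eq0 /m => /eqP; lra.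
have -> : theta' = 2 * m - theta by rewrite /m; field.
apply: normal_prob_le_reflect; [exact: oner_neq0|exact: measurable_statAB_le|].
move=> y side; rewrite /= => Uy; apply: le_trans Uy; apply: statAB_antitone (ltW a0) _.
rewrite -subr_ge0; nra.
Qed.
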